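(* Let $n\ge1$, $k\ge 1$, and let $s_1,\dots,s_k$ be nonnegative integers with $S:=\sum_{i=1}^k s_i\ge 1$. There are $k$ players who independently each open one cereal box per time step; each box contains one of $n$ coupon types chosen uniformly at random, independently of everything else. Player $i$ is currently missing $s_i$ of the $n$ coupon types, and $X_i(s_i)$ is the number of boxes player $i$ must open until they have all $n$ types. Let $P_1(s_1,\dots,s_k)$ be the probability that the first player is the slowest to complete the collection, i.e. that $X_1(s_1)=\max\{X_1(s_1),\dots,X_k(s_k)\}$. Then $$P_1(s_1,\dots,s_k)=\frac{s_1}{\sum_{i=1}^k s_i}+o(1).$$
   Context: The term $o(1)$ denotes a quantity tending to $0$ as $n\to\infty$ with $k$ and $s_1,\dots,s_k$ fixed. *)

From HB Require Import structures.
From mathcomp Require Import all_boot all_order all_algebra.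
From mathcomp Require Import all_classical all_reals all_analysis.
Set Implicit Arguments. Unset Strict Implicit. Unset Printing Implicit Defensive.
Import Order.TTheory GRing.Theory Num.Theory.
Import numFieldNormedType.Exports.
Local Open Scope ring_scope.

(* Horizon T: box j (j < T) of player i
   has content w (i, j), w uniform over {ffun 'I_k * 'I_T -> 'I_n}
   (i.e. all contents i.i.d. uniform).  Player i initially owns all types
   c with s i <= c, i.e. is missing exactly the s i types 0,...,s i - 1
   (for s i <= n; by symmetry the identity of the missing types is irrelevant). *)

Definition collected (n k : nat) (s : 'I_k -> nat) (T : nat)
    (w : {ffun 'I_k * 'I_T -> 'I_n}) (i : 'I_k) (t : nat) : {set 'I_n} :=
  [set c : 'I_n | (s i <= c)%N] :|:
  [set c : 'I_n | [exists j : 'I_T, (j < t)%N && (w (i, j) == c)]].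

Definition done_by (n k : nat) (s : 'I_k -> nat) (T : nat)
    (w : {ffun 'I_k * 'I_T -> 'I_n}) (i : 'I_k) (t : nat) : bool :=
  collected s w i t == [set: 'I_n]%SET.

(* Event (within horizon T): every player finishes by time T and player i0
   is (weakly) the slowest: X_{i0} >= X_i for all i, i.e. whenever i0 is
   done by time t, so is every i. *)
Definition slowest_event (n k : nat) (s : 'I_k -> nat) (i0 : 'I_k) (T : nat)
    : {set {ffun 'I_k * 'I_T -> 'I_n}} :=
  finset (fun w : {ffun 'I_k * 'I_T -> 'I_n} =>
    [forall i : 'I_k, done_by s w i T] &&
    [forall i : 'I_k, [forall t : 'I_T.+1,
       implb (done_by s w i0 t) (done_by s w i t)] ]).

Definition prob_slowest_T (R : realType) (n k : nat) (s : 'I_k -> nat)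
    (i0 : 'I_k) (T : nat) : R :=
  (#|slowest_event n s i0 T|)%:R / (#|{ffun 'I_k * 'I_T -> 'I_n}|)%:R.

(* P(X_{i0} = max_i X_i): the events above increase with T to the event
   {all X_i finite and X_{i0} = max_i X_i}, so this is the limit. *)
Definition prob_slowest (R : realType) (n k : nat) (s : 'I_k -> nat)
    (i0 : 'I_k) : R :=
  limn (prob_slowest_T R n s i0 : R^nat).

From HB Require Import structures.
From mathcomp Require Import all_boot all_order all_algebra.
From mathcomp Require Import all_classical all_reals all_analysis.
(* Re-imported so that finset's [set0], [setCT], [setC_inj], ... shadow their classical_sets
   homonyms. *)
From mathcomp Require Import finset.
From mathcomp Require Import ring lra zify.
Import Order.TTheory GRing.Theory Num.Theory.
Import numFieldNormedType.Exports.

Set Implicit Arguments.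
Unset Strict Implicit.
Unset Printing Implicit Defensive.

(* Let r_i be the number of types player i still misses and Phi(r) = r_i0 / sum_i r_i.
   In one round each r_i drops by one with probability r_i / n, independently.  Since
   sum_j r_j Phi(r - e_j) = (sum_j r_j) Phi(r), Phi is a martingale up to rounds in which
   two players gain at once, which cost O(S^2 / n^2) per round; and since the expected total
   sum_i r_i shrinks by the factor 1 - 1/n per round, these costs add up to O(S^2 / n).  The
   probability that i0 is the slowest within T rounds obeys the same one-round recursion, so
   it stays within 2 S^2 / n of Phi, up to the probability (1 - 1/n)^T S that the game is
   still running; let T go to infinity. *)

Section FfunCount.
Variables I T : finType.
Local Notation fT := {ffun I -> T}.

Lemma card_family_set (F : I -> pred T) :
  #|[set f : fT | [forall i, f i \in F i]]| = \prod_i #|F i|.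
Proof.
rewrite -[RHS]big_enum -(big_map (fun i => #|F i|) xpredT id) -foldrE -card_family.
by apply: eq_card => f; rewrite inE; apply/forallP/familyP.
Qed.

Lemma card_ffun_coord (B : {set T}) j :
  #|[set f : fT | f j \in B]| * #|T| = #|B| * #|T| ^ #|I|.
Proof.
pose F i := if i == j then mem B else mem predT.
have -> : [set f : fT | f j \in B] = [set f : fT | [forall i, f i \in F i]].
  apply/setP => f; rewrite !inE; apply/idP/forallP => [fB i | /(_ j)]; last by rewrite /F eqxx.
  by rewrite /F; case: eqP => [->|].
rewrite card_family_set (bigD1 j) //= {1}/F eqxx.
rewrite (eq_bigr (fun _ => #|T|)) => [|i /negbTE ij]; last by rewrite /F ij.
rewrite prod_nat_const cardC1 -mulnA -expnSr prednK //.
by apply/card_gt0P; exists j.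
Qed.

Lemma card_ffun_coord2 (B C : {set T}) j l : j != l ->
  #|[set f : fT | (f j \in B) && (f l \in C)]| * #|T| ^ 2 = #|B| * #|C| * #|T| ^ #|I|.
Proof.
move=> jl.
pose F i := if i == j then mem B else if i == l then mem C else mem predT.
have -> : [set f : fT | (f j \in B) && (f l \in C)] = [set f : fT | [forall i, f i \in F i]].
  apply/setP => f; rewrite !inE; apply/idP/forallP => [/andP[fB fC] i | H].
    by rewrite /F; case: eqP => [->|] //; case: eqP => [->|].
  by have := H j; have := H l; rewrite /F eqxx (negbTE jl) eq_sym (negbTE jl) eqxx => -> ->.
rewrite card_family_set (bigD1 j) //= (bigD1 l) 1?eq_sym //=.
rewrite {1}/F eqxx {1}/F eq_sym (negbTE jl) eqxx.
rewrite (eq_bigr (fun _ => #|T|)) => [|i /andP[/negbTE ij /negbTE il]]; last by rewrite /F ij il.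
have -> : #|I| = #|[pred i | (i != j) && (i != l)]| + 2.
  rewrite addn2 (cardD1 j) (cardD1 l) !inE eq_sym jl /= !add1n.
  by apply/eqP; rewrite !eqSS; apply/eqP; apply: eq_card => i; rewrite !inE andbT andbC.
by rewrite prod_nat_const expnD; ring.
Qed.

End FfunCount.

Lemma card_pairs (I : finType) (H : {set I}) :
  #|H| * #|H|.-1 = \sum_j \sum_(l | l != j) ((j \in H) && (l \in H) : nat).
Proof.
rewrite -sum_nat_const big_mkcond /=; apply: eq_bigr => j _.
case: (boolP (j \in H)) => jH /=; last by rewrite big1.
rewrite (cardsD1 j H) jH -sum1_card big_mkcond [RHS]big_mkcond.
by apply: eq_bigr => l _; rewrite !inE /=; case: (l != j); case: (l \in H).
Qed.

Lemma sum_subn_delta (I : finType) (r : I -> nat) j : 0 < r j ->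
  \sum_i (r i - (i == j)) = \sum_i r i - 1.
Proof.
move=> rj; rewrite (bigD1 j) //= [in RHS](bigD1 j) //= eqxx.
rewrite (eq_bigr r) => [|i /negbTE ->]; last by rewrite subn0.
by rewrite addnC addnBA // addnC.
Qed.

Section Ratio.
Variables (R : realFieldType) (I : finType) (i0 : I).
Local Open Scope ring_scope.

(* The value 1 at [r = 0] matches the event being sure once nobody misses anything. *)
Definition ratio (r : I -> nat) : R :=
  if \sum_i r i == 0%N then 1 else (r i0)%:R / (\sum_i r i)%:R.

Lemma ratio_ge0 r : 0 <= ratio r.
Proof. by rewrite /ratio; case: eqP. Qed.

Lemma ratio_le1 r : ratio r <= 1.
Proof.
rewrite /ratio; case: eqP => // /eqP S0.
by rewrite ler_pdivrMr ?ltr0n ?lt0n // mul1r ler_nat (bigD1 i0) //= leq_addr.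
Qed.

Lemma dist_ratio_le1 r r' : `|ratio r - ratio r'| <= 1.
Proof.
have := ratio_ge0 r; have := ratio_le1 r; have := ratio_ge0 r'; have := ratio_le1 r'.
by rewrite ler_norml; move=> *; apply/andP; split; lra.
Qed.

Lemma sum_ratio_dec r : (0 < r i0)%N ->
  \sum_j (r j)%:R * ratio (fun i => r i - (i == j))%N = (\sum_i r i)%:R * ratio r.
Proof.
move=> r0; set S := (\sum_i r i)%N.
have S_gt0 : (0 < S)%N by rewrite /S (bigD1 i0) //= ltn_addr.
have -> : S%:R * ratio r = (r i0)%:R.
  by rewrite /ratio -/S gtn_eqF // mulrC divfK // pnatr_eq0 -lt0n.
have ratio_dec j : (0 < r j)%N ->
    ratio (fun i => r i - (i == j))%N =
    if S == 1%N then 1 else ((r i0)%:R - (i0 == j)%:R) / (S - 1)%:R.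
  move=> rj; rewrite /ratio sum_subn_delta // -/S subn_eq0.
  have -> : (S <= 1)%N = (S == 1%N) by lia.
  by case: eqP => // _; rewrite natrB //; case: eqP => // <-.
rewrite (eq_bigr (fun j => (r j)%:R * if S == 1%N then 1 else
                                       ((r i0)%:R - (i0 == j)%:R) / (S - 1)%:R)); last first.
  by move=> j _; case: (posnP (r j)) => [->|/ratio_dec ->]; rewrite ?mul0r.
have ri0_le : (r i0 <= S)%N by rewrite /S (bigD1 i0) //= leq_addr.
case: eqP => [S1|/eqP S1].
  by under eq_bigr do rewrite mulr1; rewrite -natr_sum -/S S1; congr _%:R; lia.
under eq_bigr do rewrite mulrA; rewrite -mulr_suml; under eq_bigr do rewrite mulrBr.
rewrite sumrB -mulr_suml -natr_sum -/S (bigD1 i0) //= eqxx mulr1.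
rewrite big1 => [|j]; last by rewrite eq_sym => /negbTE ->; rewrite mulr0.
rewrite addr0 natrB ?(leq_trans r0) //.
have -> : S%:R * (r i0)%:R - (r i0)%:R = (S%:R - 1) * (r i0)%:R :> R by ring.
by rewrite mulrC mulKf // subr_eq0 pnatr_eq1.
Qed.

Lemma ratio_second_order r (H : {set I}) :
  `|ratio (fun i => r i - (i \in H))%N - ratio r
    - \sum_(j in H) (ratio (fun i => r i - (i == j))%N - ratio r)|
  <= 2 * (#|H| * #|H|.-1)%N%:R.
Proof.
have [H0|H1|H2] : [\/ #|H| = 0%N, #|H| = 1%N | (2 <= #|H|)%N].
- by case: #|H| => [|[|m]]; [constructor 1|constructor 2|constructor 3].
- rewrite (cards0_eq H0) big_set0.
  rewrite (_ : (fun i => _) = r) ?subrr ?normr0 ?mulr_ge0 //.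
  by apply: funext => i; rewrite inE subn0.
- have [j ->] : exists j, H = [set j] by apply/cards1P/eqP.
  rewrite big_set1 (_ : (fun i => _) = (fun i => r i - (i == j))%N).
    by rewrite subrr normr0 mulr_ge0.
  by apply: funext => i; rewrite inE.
- have sum_le : `|\sum_(j in H) (ratio (fun i => r i - (i == j))%N - ratio r)| <= #|H|%:R.
    apply: le_trans (ler_norm_sum _ _ _) _.
    by rewrite -sum1_card natr_sum; apply: ler_sum => j _; apply: dist_ratio_le1.
  apply: le_trans (ler_normB _ _) _; apply: le_trans (lerD (dist_ratio_le1 _ _) sum_le) _.
  have : (1 + #|H| <= 2 * (#|H| * #|H|.-1))%N by nia.
  by rewrite -(ler_nat R) natrD natrM.
Qed.

End Ratio.

Section Collectors.
Variables n k : nat.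
Local Notation state := ('I_k -> {set 'I_n}).
Local Notation round := {ffun 'I_k -> 'I_n}.
Local Notation rounds T := {ffun 'I_k * 'I_T -> 'I_n}.

Definition collected_from (A : state) T (w : rounds T) i t : {set 'I_n} :=
  A i :|: [set c : 'I_n | [exists j : 'I_T, (j < t) && (w (i, j) == c)]].

Definition complete_from (A : state) T (w : rounds T) i t :=
  collected_from A w i t == [set: 'I_n].

Definition slowest_from (A : state) (i0 : 'I_k) T : {set rounds T} :=
  [set w : rounds T | [forall i, complete_from A w i T] &&
    [forall i, [forall t : 'I_T.+1, complete_from A w i0 t ==> complete_from A w i t]]].

Definition initial_state (s : 'I_k -> nat) : state :=
  fun i => [set c : 'I_n | s i <= c].

Lemma slowest_eventE (s : 'I_k -> nat) i0 T :
  slowest_event n s i0 T = slowest_from (initial_state s) i0 T.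
Proof. by []. Qed.

Definition first_round T (w : rounds T.+1) : round := [ffun i => w (i, ord0)].

Definition later_rounds T (w : rounds T.+1) : rounds T :=
  [ffun p => w (p.1, lift ord0 p.2)].

Definition cons_round T (vw : round * rounds T) : rounds T.+1 :=
  [ffun p : 'I_k * 'I_T.+1 => if unlift ord0 p.2 is Some j then vw.2 (p.1, j)
                              else vw.1 p.1].

Lemma cons_roundK T : cancel (@cons_round T) (fun w => (first_round w, later_rounds w)).
Proof.
case=> v w /=; congr pair; apply/ffunP => x; rewrite !ffunE /=.
  by rewrite unlift_none.
by rewrite liftK; case: x.
Qed.

Lemma split_roundK T : cancel (fun w => (first_round w, later_rounds w)) (@cons_round T).
Proof.
move=> w; apply/ffunP => -[i j]; rewrite !ffunE /=.
by case: unliftP => [j'|] -> /=; rewrite ?ffunE.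
Qed.

Definition add_round (A : state) (v : round) : state := fun i => A i :|: [set v i].

Lemma collected_from0 (A : state) T (w : rounds T) i : collected_from A w i 0 = A i.
Proof.
apply/setP => c; rewrite !inE.
by case: (c \in A i) => //=; apply/existsP => -[j].
Qed.

Lemma collected_fromS (A : state) T (w : rounds T.+1) i t :
  collected_from A w i t.+1 = collected_from (add_round A (first_round w)) (later_rounds w) i t.
Proof.
apply/setP => c; rewrite !inE -orbA; congr orb.
apply/existsP/idP.
  case=> j /andP[jt /eqP wj]; case: (unliftP ord0 j) wj jt => [j'|] -> wj jt.
    apply/orP; right; apply/existsP; exists j'; rewrite ffunE /= wj eqxx andbT.
    by rewrite lift0 in jt.
  by rewrite ffunE wj eqxx.
case/orP.
  by rewrite ffunE => /eqP wc; exists ord0; rewrite wc eqxx.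
case/existsP => j /andP[jt]; rewrite ffunE /= => wj; exists (lift ord0 j).
by rewrite lift0 ltnS jt wj.
Qed.

Lemma forall_ordS m (P : nat -> bool) :
  [forall t : 'I_m.+1, P t] = P 0 && [forall t : 'I_m, P t.+1].
Proof.
apply/forallP/andP => [H|[H0 /forallP H] t].
  by split; [exact: (H ord0) | apply/forallP => t; have := H (lift ord0 t); rewrite lift0].
by case: (unliftP ord0 t) => [t'|] ->; rewrite ?lift0.
Qed.

Definition slowest_at_start (A : state) i0 :=
  [forall i, (A i0 == [set: 'I_n]) ==> (A i == [set: 'I_n])].

Lemma slowest_fromS (A : state) i0 T (w : rounds T.+1) :
  (w \in slowest_from A i0 T.+1) =
  slowest_at_start A i0 && (later_rounds w \in slowest_from (add_round A (first_round w)) i0 T).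
Proof.
rewrite !inE /complete_from.
under eq_forallb => i do rewrite collected_fromS.
case: [forall i, _]; rewrite ?andbF //=.
under eq_forallb => i do
  rewrite (forall_ordS _ (fun t => (collected_from A w i0 t == [set: 'I_n])
                                    ==> (collected_from A w i t == [set: 'I_n])))
          !collected_from0.
under eq_forallb => i do under eq_forallb => t do rewrite !collected_fromS.
apply/forallP/andP => [H|[/forallP H1 /forallP H2] i]; last by rewrite H1 H2.
by split; apply/forallP => i; case/andP: (H i).
Qed.

Lemma card_slowest_fromS (A : state) i0 T :
  #|slowest_from A i0 T.+1| =
  \sum_(v : round) slowest_at_start A i0 * #|slowest_from (add_round A v) i0 T|.
Proof.
rewrite -sum1_card big_mkcond /= (reindex (@cons_round T)); last first.
  by exists (fun w => (first_round w, later_rounds w)) => x _;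
    [apply: cons_roundK | apply: split_roundK].
rewrite -(pair_bigA _ (fun v w => if cons_round (v, w) \in slowest_from A i0 T.+1 then 1 else 0)).
apply: eq_bigr => v _ /=.
have first_cons w : first_round (cons_round (v, w)) = v by case: (cons_roundK (v, w)).
have later_cons w : later_rounds (cons_round (v, w)) = w by case: (cons_roundK (v, w)).
under eq_bigr => w _ do rewrite slowest_fromS first_cons later_cons.
case: (slowest_at_start A i0) => /=; last by rewrite big1 // mul0n.
by rewrite mul1n -sum1_card [RHS]big_mkcond.
Qed.

Definition missing (A : state) i := #|~: A i|.

Definition total_missing (A : state) := \sum_i missing A i.

Definition gainers (A : state) (v : round) := [set i | v i \notin A i].

Lemma missing_eq0 (A : state) i : (missing A i == 0) = (A i == [set: 'I_n]).
Proof. by rewrite cards_eq0 -setCT (inj_eq (@setC_inj _)). Qed.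

Lemma total_missing_eq0 (A : state) :
  (total_missing A == 0) = [forall i, A i == [set: 'I_n]].
Proof. by rewrite sum_nat_eq0; apply: eq_forallb => i; rewrite missing_eq0. Qed.

Lemma missing_le_total (A : state) i : missing A i <= total_missing A.
Proof. by rewrite /total_missing (bigD1 i) //= leq_addr. Qed.

Lemma gainer_le_missing (A : state) v i : (i \in gainers A v) <= missing A i.
Proof.
rewrite inE; case: (boolP (v i \in A i)) => //= viA.
by apply/card_gt0P; exists (v i); rewrite inE.
Qed.

Lemma missing_add_round (A : state) v i :
  missing (add_round A v) i = missing A i - (i \in gainers A v).
Proof.
rewrite /missing inE setCU [in RHS](cardsD1 (v i)) inE addKn.
by apply: eq_card => c; rewrite !inE andbC.
Qed.

Lemma total_missing_add_round_le (A : state) v :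
  total_missing (add_round A v) <= total_missing A.
Proof. by apply: leq_sum => i _; rewrite missing_add_round leq_subr. Qed.

Lemma add_round_complete (A : state) v : total_missing A = 0 -> add_round A v = A.
Proof.
move/eqP; rewrite total_missing_eq0 => /forallP full.
by apply: funext => i; rewrite /add_round (eqP (full i)) setTU.
Qed.

Lemma card_round : #|{: round}| = n ^ k.
Proof. by rewrite card_ffun !card_ord. Qed.

Lemma card_rounds T : #|rounds T| = n ^ (k * T).
Proof. by rewrite card_ffun card_prod !card_ord. Qed.

Lemma collected_from_nil (A : state) (w : rounds 0) i t : collected_from A w i t = A i.
Proof.
apply/setP => c; rewrite !inE.
by case: (c \in A i) => //=; apply/existsP => -[[]].
Qed.

Lemma slowest_at_start_complete (A : state) i0 :
  total_missing A = 0 -> slowest_at_start A i0.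
Proof.
move/eqP; rewrite total_missing_eq0 => /forallP full.
by apply/forallP => i; rewrite (full i) implybT.
Qed.

Lemma slowest_at_start_active (A : state) i0 : 0 < missing A i0 -> slowest_at_start A i0.
Proof. by move=> mi0; apply/forallP => i; rewrite -missing_eq0 gtn_eqF. Qed.

Lemma slowest_at_start_stuck (A : state) i0 :
  missing A i0 = 0 -> 0 < total_missing A -> ~~ slowest_at_start A i0.
Proof.
move=> m0; rewrite lt0n total_missing_eq0 => /forallPn[i notfull].
by apply/forallPn; exists i; rewrite -missing_eq0 m0 eqxx.
Qed.

Section Potential.
Variables (R : realFieldType) (i0 : 'I_k).
Hypothesis n_gt0 : 0 < n.
Local Open Scope ring_scope.
Local Notation N := ((n ^ k)%:R : R).

Lemma n_neq0 : n%:R != 0 :> R.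
Proof. by rewrite pnatr_eq0 -lt0n. Qed.

Lemma N_gt0 : 0 < N.
Proof. by rewrite ltr0n expn_gt0 n_gt0. Qed.

Lemma card_gainer (A : state) j :
  #|[set v : round | j \in gainers A v]|%:R = (missing A j)%:R * N / n%:R :> R.
Proof.
have := card_ffun_coord (~: A j) j; rewrite !card_ord => /(congr1 (GRing.natmul (1 : R))).
rewrite !natrM => card_eq; rewrite -card_eq mulfK ?n_neq0 //.
by congr _%:R; apply: eq_card => v; rewrite !inE.
Qed.

Lemma card_gainer_pair (A : state) j l : j != l ->
  #|[set v : round | (j \in gainers A v) && (l \in gainers A v)]|%:R =
  (missing A j)%:R * (missing A l)%:R * N / n%:R ^+ 2 :> R.
Proof.
move=> jl; have := card_ffun_coord2 (~: A j) (~: A l) jl.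
rewrite !card_ord => /(congr1 (GRing.natmul (1 : R))).
rewrite !natrM => card_eq; rewrite expr2 -card_eq mulfK ?mulf_neq0 ?n_neq0 //.
by congr _%:R; apply: eq_card => v; rewrite !inE.
Qed.

Lemma sum_gainer_pairs (A : state) :
  \sum_(v : round) (#|gainers A v| * #|gainers A v|.-1)%N%:R
  <= (total_missing A)%:R ^+ 2 * N / n%:R ^+ 2 :> R.
Proof.
have pair_count j l : l != j ->
    \sum_(v : round) ((j \in gainers A v) && (l \in gainers A v) : nat)%:R =
    (missing A j)%:R * (missing A l)%:R * N / n%:R ^+ 2.
  move=> lj; rewrite -card_gainer_pair 1?eq_sym // -sum1_card natr_sum [RHS]big_mkcond.
  by apply: eq_bigr => v _; rewrite inE; case: (_ && _).
under eq_bigr => v _ do rewrite card_pairs natr_sum.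
under eq_bigr => v _ do under eq_bigr => j _ do rewrite natr_sum.
rewrite exchange_big /=; under eq_bigr => j _ do rewrite exchange_big /=.
apply: (@le_trans _ _ (\sum_j \sum_l (missing A j)%:R * (missing A l)%:R * N / n%:R ^+ 2)).
  apply: ler_sum => j _; rewrite [X in _ <= X](bigD1 j) //= (eq_bigr _ (pair_count j)).
  by rewrite lerDr mulr_ge0 // invr_ge0 exprn_ge0.
rewrite /total_missing natr_sum [(\sum_i _) ^+ 2]expr2 !mulr_suml.
by under [in X in _ <= X]eq_bigr => j _ do rewrite mulr_sumr !mulr_suml.
Qed.

Definition mean_next (f : state -> R) (A : state) : R :=
  (\sum_(v : round) f (add_round A v)) / N.

Lemma mean_const (c : R) : (\sum_(v : round) c) / N = c.
Proof. by rewrite sumr_const card_round -[c *+ _]mulr_natr mulfK // gt_eqF ?N_gt0. Qed.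

Lemma mean_next_le (f g : state -> R) A :
  (forall v, f (add_round A v) <= g (add_round A v)) -> mean_next f A <= mean_next g A.
Proof. by move=> fg; rewrite ler_pM2r ?invr_gt0 ?N_gt0 //; apply: ler_sum. Qed.

Lemma mean_next_ge0 (f : state -> R) A :
  (forall v, 0 <= f (add_round A v)) -> 0 <= mean_next f A.
Proof. by move=> f_ge0; rewrite divr_ge0 ?sumr_ge0. Qed.

Lemma mean_next_complete (f : state -> R) A : total_missing A = 0%N -> mean_next f A = f A.
Proof.
move=> A_full; rewrite /mean_next; under eq_bigr => v _ do rewrite add_round_complete //.
exact: mean_const.
Qed.

Lemma mean_next_affine (f g : state -> R) b A :
  mean_next (fun B => f B + b * g B) A = mean_next f A + b * mean_next g A.
Proof. by rewrite /mean_next big_split -mulr_sumr /= mulrDl mulrA. Qed.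

Lemma mean_sum_gainers A (d : 'I_k -> R) :
  (\sum_(v : round) \sum_(j in gainers A v) d j) / N = \sum_j d j * (missing A j)%:R / n%:R.
Proof.
under eq_bigr => v _ do rewrite big_mkcond /=.
rewrite exchange_big mulr_suml; apply: eq_bigr => j _ /=.
rewrite -big_mkcond (eq_bigl (fun v => v \in [set v : round | j \in gainers A v])) => [|v];
  last by rewrite inE.
rewrite sumr_const -[d j *+ _]mulr_natr card_gainer.
by field; rewrite n_neq0 gt_eqF ?N_gt0.
Qed.

Lemma mean_next_total A :
  mean_next (fun B => (total_missing B)%:R) A = (total_missing A)%:R * (1 - n%:R^-1).
Proof.
have total_add v :
    (total_missing (add_round A v))%:R = (total_missing A)%:R - \sum_(j in gainers A v) 1 :> R.
  rewrite /total_missing !natr_sum [X in _ - X]big_mkcond -sumrB; apply: eq_bigr => i _.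
  by rewrite missing_add_round natrB ?gainer_le_missing //; case: (i \in _).
rewrite /mean_next (eq_bigr _ (fun v _ => total_add v)) sumrB mulrBl mean_sum_gainers mean_const.
rewrite mulrBr mulr1 {2}/total_missing natr_sum mulr_suml.
by congr (_ - _); apply: eq_bigr => j _; rewrite mul1r.
Qed.

Definition share (A : state) : R := ratio R i0 (missing A).

Lemma share_ge0 A : 0 <= share A.
Proof. exact: ratio_ge0. Qed.

Lemma share_le1 A : share A <= 1.
Proof. exact: ratio_le1. Qed.

Lemma share_complete A : total_missing A = 0%N -> share A = 1.
Proof. by move=> t0; rewrite /share /ratio -/(total_missing A) t0. Qed.

Lemma share_stuck A : missing A i0 = 0%N -> (0 < total_missing A)%N -> share A = 0.
Proof. by move=> m0 tpos; rewrite /share /ratio -/(total_missing A) gtn_eqF // m0 mul0r. Qed.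

(* The first-order term of [share (add_round A v) - share A] averages to zero by
   [sum_ratio_dec]; the remainder is controlled by pairs of simultaneous gainers. *)
Lemma mean_next_share A : (0 < missing A i0)%N ->
  `|mean_next share A - share A| <= 2 * (total_missing A)%:R ^+ 2 / n%:R ^+ 2.
Proof.
move=> mi0.
pose psi j := ratio R i0 (fun i => missing A i - (i == j))%N.
pose err v := share (add_round A v) - share A - \sum_(j in gainers A v) (psi j - share A).
have share_add v :
    share (add_round A v) = ratio R i0 (fun i => missing A i - (i \in gainers A v))%N.
  by congr ratio; apply: funext => i; rewrite missing_add_round.
have first_order : (\sum_(v : round) \sum_(j in gainers A v) (psi j - share A)) / N = 0.
  rewrite mean_sum_gainers
    (eq_bigr (fun j => ((missing A j)%:R * psi j - (missing A j)%:R * share A) / n%:R));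
    last by move=> j _; rewrite mulrBl [psi j * _]mulrC [share A * _]mulrC.
  rewrite -mulr_suml sumrB -mulr_suml -natr_sum sum_ratio_dec //.
  by rewrite subrr mul0r.
have err_le v : `|err v| <= 2 * (#|gainers A v| * #|gainers A v|.-1)%N%:R.
  by rewrite /err share_add; apply: ratio_second_order.
have -> : mean_next share A - share A =
    (\sum_(v : round) \sum_(j in gainers A v) (psi j - share A)) / N + (\sum_(v : round) err v) / N.
  rewrite -mulrDl -big_split /= (eq_bigr (fun v => share (add_round A v) - share A)) => [|v _];
    last by rewrite /err addrC subrK.
  by rewrite sumrB mulrBl mean_const.
rewrite first_order add0r normrM [`|_^-1|]gtr0_norm ?invr_gt0 ?N_gt0 // ler_pdivrMr ?N_gt0 //.
apply: le_trans (ler_norm_sum _ _ _) _; apply: le_trans (ler_sum _ (fun v _ => err_le v)) _.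
rewrite -mulr_sumr (_ : 2 * _ / _ * N = 2 * ((total_missing A)%:R ^+ 2 * N / n%:R ^+ 2));
  last by rewrite mulrAC !mulrA.
by rewrite ler_wpM2l //; apply: sum_gainer_pairs.
Qed.

Lemma quadratic_drift_le (t S0 : nat) : (t <= S0)%N ->
  2 * t%:R ^+ 2 / n%:R ^+ 2 <= 2 * S0%:R / n%:R * t%:R / n%:R :> R.
Proof.
move=> tS; have -> : 2 * S0%:R / n%:R * t%:R / n%:R = 2 * t%:R * S0%:R / n%:R ^+ 2 :> R.
  by field; rewrite n_neq0.
by rewrite ler_pM2r ?invr_gt0 ?exprn_gt0 ?ltr0n // expr2 mulrA ler_wpM2l ?ler_nat ?mulr_ge0.
Qed.

Definition prob_from T (A : state) : R := #|slowest_from A i0 T|%:R / #|rounds T|%:R.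

Lemma prob_fromS T A :
  prob_from T.+1 A = if slowest_at_start A i0 then mean_next (prob_from T) A else 0.
Proof.
rewrite /prob_from card_slowest_fromS !card_rounds natr_sum.
case: (slowest_at_start A i0); last by rewrite big1 ?mul0r // => v _; rewrite mul0n.
under eq_bigr do rewrite mul1n.
rewrite /mean_next -mulr_suml mulnS expnD natrM; field.
by rewrite gt_eqF ?N_gt0 // pnatr_eq0 expn_eq0 negb_and -lt0n n_gt0.
Qed.

Lemma prob_from0 A : prob_from 0 A = (total_missing A == 0%N)%:R.
Proof.
have mem_nil w : (w \in slowest_from A i0 0) = (total_missing A == 0%N).
  rewrite inE /complete_from total_missing_eq0.
  under eq_forallb do rewrite collected_from_nil.
  under [X in _ && X]eq_forallb do under eq_forallb do rewrite !collected_from_nil.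
  case: [forall i, _] / forallP => [full|] //=.
  by apply/forallP => i; apply/forallP => t; rewrite (full i) implybT.
rewrite /prob_from card_rounds muln0 expn0 divr1; case: eqP => t0.
  congr _%:R; rewrite eq_cardT => [|w]; last by rewrite mem_nil t0.
  by rewrite -cardT card_rounds muln0.
by congr _%:R; rewrite eq_card0 // => w; rewrite mem_nil; apply/eqP.
Qed.

Lemma prob_from_complete T A : total_missing A = 0%N -> prob_from T A = 1.
Proof.
move=> t0; elim: T => [|T IH]; first by rewrite prob_from0 t0.
by rewrite prob_fromS slowest_at_start_complete // mean_next_complete.
Qed.

Lemma prob_from_stuck T A :
  missing A i0 = 0%N -> (0 < total_missing A)%N -> prob_from T A = 0.
Proof.
move=> m0 tpos; case: T => [|T]; first by rewrite prob_from0 gtn_eqF.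
by rewrite prob_fromS (negbTE (slowest_at_start_stuck m0 tpos)).
Qed.

Lemma prob_from0_active A : (0 < missing A i0)%N -> prob_from 0 A = 0.
Proof. by move=> mi0; rewrite prob_from0 gtn_eqF // (leq_trans mi0 (missing_le_total _ _)). Qed.

Lemma prob_fromS_active T A :
  (0 < missing A i0)%N -> prob_from T.+1 A = mean_next (prob_from T) A.
Proof. by move=> mi0; rewrite prob_fromS slowest_at_start_active. Qed.

Lemma prob_from_ge0 T A : 0 <= prob_from T A.
Proof. by rewrite divr_ge0. Qed.

Lemma prob_from_mono T A : prob_from T A <= prob_from T.+1 A.
Proof.
elim: T A => [|T IH] A.
all: have [t0|tpos] := posnP (total_missing A); first by rewrite !prob_from_complete.
all: have [m0|mpos] := posnP (missing A i0); first by rewrite !prob_from_stuck.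
  by rewrite prob_from0_active // prob_fromS_active // mean_next_ge0 // => v; apply: prob_from_ge0.
rewrite [X in _ <= X]prob_fromS_active // prob_fromS_active //.
by apply: mean_next_le => v; apply: IH.
Qed.

Lemma prob_from_le S0 T A : (total_missing A <= S0)%N ->
  prob_from T A <= share A + 2 * S0%:R / n%:R * (total_missing A)%:R.
Proof.
set a := 2 * S0%:R / n%:R.
elim: T A => [|T IH] A tS.
all: have [t0|tpos] := posnP (total_missing A).
all: try by rewrite prob_from_complete // share_complete // t0 mulr0 addr0.
all: have bound_ge0 : 0 <= share A + a * (total_missing A)%:R
  by rewrite addr_ge0 ?share_ge0 ?mulr_ge0 ?divr_ge0.
all: have [m0|mpos] := posnP (missing A i0); first by rewrite prob_from_stuck.
  by rewrite prob_from0_active.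
rewrite prob_fromS_active //.
apply: le_trans (mean_next_le (g := fun B => share B + a * (total_missing B)%:R) _) _.
  by move=> v; apply: IH; apply: leq_trans (total_missing_add_round_le _ _) tS.
rewrite mean_next_affine mean_next_total.
have := mean_next_share mpos; rewrite ler_norml => /andP[_ drift].
have := quadratic_drift_le tS; rewrite -/a => slack.
set t : R := (total_missing A)%:R in drift slack *.
have -> : a * (t * (1 - n%:R^-1)) = a * t - a * t / n%:R by ring.
lra.
Qed.

Lemma prob_from_ge S0 T A : (total_missing A <= S0)%N ->
  share A - (2 * S0%:R / n%:R + (1 - n%:R^-1) ^+ T) * (total_missing A)%:R <= prob_from T A.
Proof.
set a := 2 * S0%:R / n%:R; set q := 1 - n%:R^-1.
have a_ge0 : 0 <= a by rewrite /a divr_ge0 ?mulr_ge0.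
have q_ge0 : 0 <= q by rewrite subr_ge0 invf_le1 ?ler1n ?ltr0n.
elim: T A => [|T IH] A tS.
all: have [t0|tpos] := posnP (total_missing A).
all: try by rewrite prob_from_complete // share_complete // t0 mulr0 subr0.
  rewrite prob_from0 gtn_eqF //= mulr0n expr0 mulrDl mul1r.
  have : 1 <= (total_missing A)%:R :> R by rewrite ler1n.
  have := share_le1 A.
  have : 0 <= a * (total_missing A)%:R by rewrite mulr_ge0.
  lra.
have [m0|mpos] := posnP (missing A i0).
  by rewrite prob_from_stuck // share_stuck // sub0r oppr_le0 mulr_ge0 ?addr_ge0 ?exprn_ge0.
rewrite prob_fromS_active //.
apply: le_trans (mean_next_le (f := fun B => share B + - (a + q ^+ T) * (total_missing B)%:R) _);
  last by move=> v; rewrite mulNr; apply: IH; apply: leq_trans (total_missing_add_round_le _ _) tS.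
rewrite mean_next_affine mean_next_total.
have := mean_next_share mpos; rewrite ler_norml => /andP[drift _].
have := quadratic_drift_le tS; rewrite -/a => slack.
set t : R := (total_missing A)%:R in drift slack *.
have -> : - (a + q ^+ T) * (t * q) = - (a * t - a * t / n%:R + q ^+ T.+1 * t).
  by rewrite exprSr /q; ring.
lra.
Qed.

End Potential.
End Collectors.

Lemma card_ord_lt n m : (m <= n)%N -> #|[set c : 'I_n | (c < m)%N]| = m.
Proof.
move=> mn; have -> : [set c : 'I_n | (c < m)%N] = [set widen_ord mn j | j : 'I_m].
  apply/setP => c; rewrite inE; apply/idP/imsetP => [cm|[j _ ->]]; last by rewrite /= ltn_ord.
  by exists (Ordinal cm) => //; apply: val_inj.
by rewrite card_imset ?card_ord // => a b /(congr1 val) /= ab; apply: val_inj.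
Qed.

Lemma missing_initial n k (s : 'I_k -> nat) i :
  (\sum_j s j <= n)%N -> missing (initial_state n s) i = s i.
Proof.
move=> S_le_n; have si_le : (s i <= n)%N.
  by apply: leq_trans S_le_n; rewrite (bigD1 i) //= leq_addr.
rewrite /missing -[RHS](card_ord_lt si_le).
by apply: eq_card => c; rewrite !inE ltnNge.
Qed.

Lemma total_missing_initial n k (s : 'I_k -> nat) :
  (\sum_i s i <= n)%N -> total_missing (initial_state n s) = \sum_i s i.
Proof. by move=> S_le_n; apply: eq_bigr => i _; apply: missing_initial. Qed.

Lemma share_initial (R : realFieldType) n k (s : 'I_k -> nat) i0 :
  (0 < \sum_i s i)%N -> (\sum_i s i <= n)%N ->
  share R i0 (initial_state n s) = ((s i0)%:R / (\sum_i s i)%:R)%R.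
Proof.
move=> S_gt0 S_le_n.
by rewrite /share /ratio -/(total_missing _) total_missing_initial // gtn_eqF // missing_initial.
Qed.

Lemma prob_slowest_TE (R : realType) n k (s : 'I_k -> nat) i0 T :
  prob_slowest_T R n s i0 T = prob_from R i0 T (initial_state n s).
Proof. by rewrite /prob_slowest_T slowest_eventE. Qed.

Local Open Scope ring_scope.

Lemma nondecreasing_limn_squeeze (R : realType) (u e : R^nat) (c b : R) :
  {homo u : m m' / (m <= m')%N >-> m <= m'} -> (forall m, u m <= b) ->
  (forall m, c - e m <= u m) -> (e @ \oo --> 0)%classic -> c <= limn u <= b.
Proof.
move=> u_nd u_le u_ge e0.
have u_cvg : cvgn u by apply: nondecreasing_is_cvgn u_nd _; exists b => _ [m _ <-].
apply/andP; split; last by apply: limr_le => //; apply: nearW.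
have ce : ((fun m => c - e m) @ \oo --> c)%classic.
  by have := cvgB (cvg_cst c) e0; rewrite subr0 => ce; exact: ce.
rewrite -(cvg_lim _ ce) //; apply: ler_lim => //; last exact: nearW.
by apply/cvg_ex; exists c.
Qed.

Lemma prob_slowest_near_ratio (R : realType) n k (s : 'I_k -> nat) i0 :
  (0 < \sum_i s i)%N -> (\sum_i s i <= n)%N ->
  `|prob_slowest R n s i0 - (s i0)%:R / (\sum_i s i)%:R| <= 2 * (\sum_i s i)%:R ^+ 2 / n%:R.
Proof.
set S := (\sum_i s i)%N => S_gt0 S_le_n.
have n_gt0 : (0 < n)%N := leq_trans S_gt0 S_le_n.
set a : R := 2 * S%:R / n%:R; set q : R := 1 - n%:R^-1.
have q_lt1 : `|q| < 1.
  rewrite ger0_norm ?subr_ge0 ?invf_le1 ?ler1n ?ltr0n //.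
  by rewrite ltrBlDr ltrDl invr_gt0 ltr0n.
set A := initial_state n s; set t : R := (total_missing A)%:R.
have tA : (total_missing A <= S)%N by rewrite total_missing_initial.
have /andP[lim_ge lim_le] :
    share R i0 A - a * t <= prob_slowest R n s i0 <= share R i0 A + a * t.
  apply: (@nondecreasing_limn_squeeze _ _ (fun T => q ^+ T * t)).
  - by apply/nondecreasing_seqP => T; rewrite !prob_slowest_TE; apply: prob_from_mono.
  - by move=> T; rewrite prob_slowest_TE; apply: prob_from_le.
  - by move=> T; rewrite prob_slowest_TE -addrA -opprD -mulrDl; apply: prob_from_ge.
  - by rewrite -(mul0r t); apply: cvgM (cvg_expr q_lt1) (cvg_cst _).
rewrite /t share_initial // total_missing_initial // in lim_ge lim_le.
have -> : 2 * S%:R ^+ 2 / n%:R = a * S%:R by rewrite /a; ring.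
by rewrite ler_norml; apply/andP; split; lra.
Qed.

Theorem mainTheorem4 (R : realType) (k : nat) (hk : (0 < k)%N)
    (s : 'I_k -> nat) (hS : (1 <= \sum_(i < k) s i)%N) :
  forall eps : R, 0 < eps ->
  exists N : nat, forall n : nat, (N <= n)%N ->
    `| prob_slowest R n s (Ordinal hk)
       - (s (Ordinal hk))%:R / (\sum_(i < k) s i)%:R | < eps.
Proof.
move=> eps eps_gt0; set S := (\sum_(i < k) s i)%N.
exists (S + (Num.truncn (2 * S%:R ^+ 2 / eps)).+1)%N => n n_large.
have n_gt0 : (0 < n)%N by apply: leq_trans n_large; rewrite addnS.
apply: le_lt_trans (prob_slowest_near_ratio _ _ hS (leq_trans (leq_addr _ _) n_large)) _.
rewrite ltr_pdivrMr ?ltr0n // -ltr_pdivrMl // mulrC.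
apply: lt_le_trans (truncnS_gt _) _; rewrite ler_nat.
exact: leq_trans (leq_addl _ _) n_large.
Qed.
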